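(* Let $X$ have a pdf $f$ satisfying Conditions (A) and (B) below. Then $$\lim_{\delta\to0}\Big[\mathrm{AoI}(S_{\mathrm z},Q_{\mathrm{uni}}^\delta,F_{\mathrm s})-\tfrac32 H[Q_{\mathrm{uni}}^\delta(X)]\Big]=0.$$
   Context: Let $X$ be a real random variable with pdf $f$. Condition (A): $f$ is continuous and differentiable, and its support is a bounded interval $I$. Condition (B): $\int_I f\log_2^2 f\,dx$ and $-\int_I f\log_2 f\,dx$ exist and are finite. The uniform quantizer $Q_{\mathrm{uni}}^\delta$ partitions $I$ into consecutive cells of length $\delta$. Let $p_i$ be the probability that $X$ lies in cell $i$, and $H[Q_{\mathrm{uni}}^\delta(X)]=-\sum_ip_i\log_2p_i$. The real-valued Shannon code $F_{\mathrm s}$ assigns length $l_i=-\log_2p_i$ to cell $i$, and $L=l_i$ when $X$ is in cell $i$. Under the zero-wait sampler, $\mathrm{AoI}(S_{\mathrm z},Q_{\mathrm{uni}}^\delta,F_{\mathrm s})=\frac{E[L^2]}{2E[L]}+E[L]$. *)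

From HB Require Import structures.
From mathcomp Require Import all_boot all_order all_algebra.
From mathcomp Require Import all_classical all_reals all_analysis.

Import Order.TTheory GRing.Theory Num.Theory.
Import numFieldNormedType.Exports.
Local Open Scope classical_set_scope.
Local Open Scope ring_scope.

Definition log2 {R : realType} (x : R) : R := ln x / ln 2.

Definition ncells {R : realType} (a b delta : R) : nat :=
  `|Num.ceil ((b - a) / delta)|%N.

(* index of the cell containing x in [a,b]: cells are consecutive intervals
   [a + k delta, a + (k+1) delta), the last one being closed at b (and
   possibly shorter than delta) *)
Definition cellidx {R : realType} (a b delta x : R) : nat :=
  minn (Num.truncn ((x - a) / delta)) (ncells a b delta).-1.

Definition cell {R : realType} (a b delta : R) (k : nat) : set R :=
  [set x | a <= x <= b /\ cellidx a b delta x = k].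

Definition cellprob {R : realType} {d} {T : measurableType d}
  (P : probability T R) (X : {RV P >-> R}) (a b delta : R) (k : nat) : R :=
  fine (P (X @^-1` cell a b delta k)).

Definition H_uni {R : realType} {d} {T : measurableType d}
  (P : probability T R) (X : {RV P >-> R}) (a b delta : R) : R :=
  - \sum_(k < ncells a b delta)
      cellprob P X a b delta k * log2 (cellprob P X a b delta k).

(* Shannon code: l_i = - log2 p_i; L = l_i when X is in cell i *)
Definition EL {R : realType} {d} {T : measurableType d}
  (P : probability T R) (X : {RV P >-> R}) (a b delta : R) : R :=
  \sum_(k < ncells a b delta)
      cellprob P X a b delta k * (- log2 (cellprob P X a b delta k)).

Definition EL2 {R : realType} {d} {T : measurableType d}
  (P : probability T R) (X : {RV P >-> R}) (a b delta : R) : R :=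
  \sum_(k < ncells a b delta)
      cellprob P X a b delta k * (- log2 (cellprob P X a b delta k)) ^+ 2.

Definition AoI_z_uni_s {R : realType} {d} {T : measurableType d}
  (P : probability T R) (X : {RV P >-> R}) (a b delta : R) : R :=
  EL2 P X a b delta / (2 * EL P X a b delta) + EL P X a b delta.

From HB Require Import structures.
From mathcomp Require Import all_boot all_order all_algebra.
From mathcomp Require Import all_classical all_reals all_analysis.
From mathcomp Require Import ring lra zify.
Import Order.TTheory GRing.Theory Num.Theory.
Import numFieldNormedType.Exports.
Local Open Scope classical_set_scope.
Local Open Scope ring_scope.

(* The density f is continuous on the compact support [a, b] and vanishes
   outside it, so f <= M for some M >= 1 and every cell has probability
   p_k <= M δ.  For the Shannon code the mean length E[L] is the entropy H, so
   AoI - 3/2 H = Var(L) / (2 E[L]).  The mean E[L] >= - log2 (M δ) tends to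
   +oo, whereas Var(L) <= E[(L + log2 δ)^2] = Σ_k δ u_k log2^2 u_k with
   u_k = p_k / δ <= M: since u ln^2 u is bounded on (0, M] and there are fewer
   than (b - a)/δ + 1 cells, the variance stays bounded as δ -> 0. *)

Lemma ln2_gt0 {R : realType} : 0 < ln (2 : R).
Proof. by apply: ln_gt0; rewrite ltr1n. Qed.

Lemma mul_ln_sqr_le {R : realType} (M u : R) :
  1 <= M -> 0 < u <= M -> u * ln u ^+ 2 <= 4 + M ^+ 3.
Proof.
move=> M1 /andP[u0 uM].
have [u1|u1] := leP u 1.
- (* with s = sqrt u, ln s >= 1 - 1/s gives |s ln s| <= 1,
     hence u ln^2 u = 4 (s ln s)^2 <= 4 *)
  set s := Num.sqrt u.
  have s0 : 0 < s by rewrite sqrtr_gt0.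
  have s1 : s <= 1 by rewrite -sqrtr1 ler_sqrt.
  have ss : u = s * s by rewrite -expr2 sqr_sqrtr // ltW.
  have lnsN : ln s <= 0 by exact: ln_le0.
  have lnsV : - ln s <= s^-1 - 1.
    rewrite -lnV ?posrE //; have := @le_ln1Dx R (s^-1 - 1).
    rewrite addrCA subrr addr0; apply.
    have : 0 < s^-1 by rewrite invr_gt0.
    lra.
  have slns : - ln s * s <= 1 - s.
    by have := ler_wpM2r (ltW s0) lnsV; rewrite mulrBl mulVf ?gt_eqF // mul1r.
  have M3 : 0 <= M ^+ 3 by rewrite exprn_ge0 // (le_trans ler01).
  rewrite ss lnM ?posrE //.
  have : 0 <= - ln s * s by rewrite mulr_ge0 ?oppr_ge0 // ltW.
  nra.
- have l0 : 0 <= ln u by apply/ln_ge0/ltW.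
  have l1 : ln u <= u - 1.
    by have := @le_ln1Dx R (u - 1); rewrite addrCA subrr addr0; apply; lra.
  rewrite !exprS expr0 !mulr1.
  have : u * (ln u * ln u) <= M * (M * M).
    by apply: ler_pM; rewrite ?mulr_ge0 //; [exact: ltW|nra].
  lra.
Qed.

Section FiniteMoments.
Context {R : realDomainType} {N : nat} {p : 'I_N -> R}.
Hypothesis p_ge0 : forall k, 0 <= p k.
Hypothesis p_sum1 : \sum_k p k = 1.

Lemma sum_sqr_dev (l : 'I_N -> R) (c : R) :
  \sum_k p k * (l k - c) ^+ 2 =
  (\sum_k p k * l k ^+ 2 - (\sum_k p k * l k) ^+ 2) +
  (\sum_k p k * l k - c) ^+ 2.
Proof.
have -> : \sum_k p k * (l k - c) ^+ 2 =
    \sum_k (p k * l k ^+ 2 - 2 * c * (p k * l k) + c ^+ 2 * p k).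
  by apply: eq_bigr => k _; ring.
rewrite big_split /= sumrB -!mulr_sumr p_sum1; ring.
Qed.

Lemma variance_ge0 (l : 'I_N -> R) :
  0 <= \sum_k p k * l k ^+ 2 - (\sum_k p k * l k) ^+ 2.
Proof.
have := sum_sqr_dev l (\sum_k p k * l k); rewrite subrr expr0n addr0 => <-.
by apply: sumr_ge0 => k _; rewrite mulr_ge0 // sqr_ge0.
Qed.

Lemma variance_le_sum_sqr_dev (l : 'I_N -> R) (c : R) :
  \sum_k p k * l k ^+ 2 - (\sum_k p k * l k) ^+ 2 <=
  \sum_k p k * (l k - c) ^+ 2.
Proof. by rewrite sum_sqr_dev lerDl sqr_ge0. Qed.

End FiniteMoments.

Section ShannonCode.
Context {R : realType} {M δ : R}.
Hypothesis M_ge1 : 1 <= M.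
Hypothesis δ_gt0 : 0 < δ.

Lemma shannon_dev_le (q : R) : 0 <= q <= M * δ ->
  q * (- log2 q - - log2 δ) ^+ 2 <= δ * ((4 + M ^+ 3) / ln 2 ^+ 2).
Proof.
move=> /andP[q0 qM].
have l22 : 0 < ln (2 : R) ^+ 2 by rewrite exprn_gt0 ?ln2_gt0.
have [->|q_neq0] := eqVneq q 0.
  rewrite mul0r mulr_ge0 ?(ltW δ_gt0) // divr_ge0 ?(ltW l22) //.
  by rewrite addr_ge0 // exprn_ge0 // (le_trans ler01).
have q_gt0 : 0 < q by rewrite lt_neqAle eq_sym q_neq0.
set u := q / δ.
have u_gt0 : 0 < u by rewrite divr_gt0.
have uM : u <= M by rewrite ler_pdivrMr.
have qE : q = δ * u by rewrite /u mulrC divfK // gt_eqF.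
have -> : - log2 q - - log2 δ = - (ln u / ln 2).
  rewrite /log2 /u lnM ?posrE ?invr_gt0 // lnV ?posrE //.
  by field; rewrite gt_eqF ?ln2_gt0.
rewrite sqrrN qE expr_div_n -mulrA ler_pM2l // mulrA ler_pM2r ?invr_gt0 //.
by apply: mul_ln_sqr_le; rewrite // u_gt0.
Qed.

Lemma shannon_len_ge (q : R) :
  0 <= q <= M * δ -> q * - log2 (M * δ) <= q * - log2 q.
Proof.
move=> /andP[q0 qM].
have [->|q_neq0] := eqVneq q 0; first by rewrite !mul0r.
have q_gt0 : 0 < q by rewrite lt_neqAle eq_sym q_neq0.
rewrite ler_pM2l // lerN2 /log2 ler_pM2r ?invr_gt0 ?ln2_gt0 // ler_ln ?posrE //.
by rewrite mulr_gt0 // (lt_le_trans ltr01).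
Qed.

Context {N : nat} {p : 'I_N -> R}.
Hypothesis p_ge0 : forall k, 0 <= p k.
Hypothesis p_sum1 : \sum_k p k = 1.
Hypothesis p_le : forall k, p k <= M * δ.

Lemma shannon_variance_le :
  \sum_k p k * (- log2 (p k)) ^+ 2 - (\sum_k p k * - log2 (p k)) ^+ 2 <=
  N%:R * δ * ((4 + M ^+ 3) / ln 2 ^+ 2).
Proof.
apply: (le_trans (variance_le_sum_sqr_dev p_sum1 _ (- log2 δ))).
have -> : N%:R * δ * ((4 + M ^+ 3) / ln 2 ^+ 2) =
    \sum_(k < N) δ * ((4 + M ^+ 3) / ln 2 ^+ 2).
  by rewrite sumr_const card_ord -mulrA mulr_natl.
apply: ler_sum => k _.
by apply: shannon_dev_le; rewrite p_ge0 p_le.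
Qed.

Lemma shannon_mean_ge : - log2 (M * δ) <= \sum_k p k * - log2 (p k).
Proof.
rewrite -[X in X <= _]mul1r -p_sum1 mulr_suml; apply: ler_sum => k _.
by apply: shannon_len_ge; rewrite p_ge0 p_le.
Qed.

End ShannonCode.

Section Cells.
Context {R : realType}.
Variables (a b δ : R).
Hypothesis ab : a < b.
Hypothesis δ_gt0 : 0 < δ.

Local Notation N := (ncells a b δ).

Let ncellsE : N%:R = (Num.ceil ((b - a) / δ))%:~R :> R.
Proof.
by rewrite /ncells natr_absz gtr0_norm // ceil_gt0 // divr_gt0 // subr_gt0.
Qed.

Lemma ncells_gt0 : (0 < N)%N.
Proof. by rewrite -(ltr0n R) ncellsE ltr0z ceil_gt0 // divr_gt0 // subr_gt0. Qed.

Lemma ncells_bounds : b - a <= N%:R * δ < b - a + δ.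
Proof.
have /andP[lt le] := ceil_itv ((b - a) / δ).
rewrite intrB ltr_pdivlMr // in lt; rewrite ler_pdivrMr // in le.
rewrite ncellsE le /=; lra.
Qed.

Lemma cellidx_lt x : (cellidx a b δ x < N)%N.
Proof. by have := ncells_gt0; rewrite /cellidx; lia. Qed.

Lemma cellidx_ge k x : a <= x ->
  (k <= cellidx a b δ x)%N = (k <= N.-1)%N && (a + k%:R * δ <= x).
Proof.
move=> ax; rewrite /cellidx leq_min andbC.
rewrite truncn_ge_nat ?divr_ge0 ?subr_ge0 ?(ltW δ_gt0) //.
by rewrite ler_pdivlMr // lerBrDl.
Qed.

Lemma cell_sub k x : cell a b δ k x -> a + k%:R * δ <= x <= a + k.+1%:R * δ.
Proof.
case=> /andP[ax xb] xk.
have := cellidx_ge k x ax; rewrite xk leqnn => /esym/andP[kN ->] /=.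
have := cellidx_ge k.+1 x ax; rewrite xk ltnn => /esym/nandP[kN'|]; last first.
  by rewrite -ltNge => /ltW.
have -> : k.+1 = N by move: kN kN'; have := ncells_gt0; lia.
by have /andP[+ _] := ncells_bounds; lra.
Qed.

Let cellidx_ge_set k := [set x | a <= x <= b /\ (k <= cellidx a b δ x)%N].

Let measurable_cellidx_ge_set k : measurable (cellidx_ge_set k).
Proof.
have -> : cellidx_ge_set k = [set` `[a, b]] `&`
    (if (k <= N.-1)%N then [set` `[a + k%:R * δ, +oo[] else set0).
  apply/seteqP; split=> x /=; rewrite in_itv /=.
    case=> /[dup] axb /andP[ax _]; rewrite (cellidx_ge _ _ ax) => /andP[kN ge].
    by split=> //; rewrite kN /= in_itv /= ge.
  case=> /[dup] axb /andP[ax _]; rewrite /cellidx_ge_set /= (cellidx_ge _ _ ax).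
  by case: ifP => //= kN; rewrite in_itv /= andbT.
apply: measurableI; first exact: measurable_itv.
by case: ifP => // _; exact: measurable_itv.
Qed.

Lemma measurable_cell k : measurable (cell a b δ k).
Proof.
have -> : cell a b δ k = cellidx_ge_set k `\` cellidx_ge_set k.+1.
  apply/seteqP; split=> x.
    by case=> axb <-; rewrite /cellidx_ge_set /= leqnn ltnn; split=> // -[].
  case=> -[axb ge] /= /not_andP[//|/negP]; rewrite -ltnNge => lt.
  by split => //; lia.
exact: measurableD.
Qed.

End Cells.

Section CellProbabilities.
Context {R : realType} {d : measure_display} {T : measurableType d}.
Variables (P : probability T R) (X : {RV P >-> R}).
Context {f : R -> R} {a b M : R}.
Hypothesis f_ge0 : forall x, 0 <= f x.
Hypothesis f_meas : measurable_fun setT f.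
Hypothesis X_density : forall A : set R, measurable A ->
  distribution P X A = (\int[lebesgue_measure]_(x in A) (f x)%:E)%E.
Hypothesis ab : a < b.
Hypothesis f_out : forall x, ~ (a <= x <= b) -> f x = 0.
Hypothesis f_le : forall x, f x <= M.

Lemma cellprob_ge0 δ k : 0 <= cellprob P X a b δ k.
Proof. exact: fine_ge0. Qed.

Lemma probability_support : P (X @^-1` [set x | a <= x <= b]) = 1%E.
Proof.
have := X_density setT measurableT; rewrite /distribution /pushforward /=.
rewrite preimage_setT probability_setT => ->.
have -> : [set x | a <= x <= b] = [set` `[a, b]].
  by apply/seteqP; split => x; rewrite /= in_itv.
have := X_density `[a, b] (measurable_itv _).
rewrite /distribution /pushforward /= => ->.
rewrite integral_mkcond; apply: eq_integral => x _; rewrite /patch.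
by case: ifPn => //; rewrite notin_setE /= in_itv /= => /f_out ->.
Qed.

Context {δ : R}.
Hypothesis δ_gt0 : 0 < δ.

Let measurable_X_cell k : measurable (X @^-1` cell a b δ k).
Proof. by apply: measurable_funPTI; exact: measurable_cell. Qed.

Lemma cellprob_sum1 : \sum_(k < ncells a b δ) cellprob P X a b δ k = 1.
Proof.
apply: EFin_inj; rewrite /cellprob EFin_sum_fine => [|k _]; last first.
  exact: fin_num_measure.
rewrite -measure_bigsetU_ord //; last first.
  by move=> i j _ _ [w [[_ wi] [_ wj]]]; apply: val_inj; rewrite /= -wi -wj.
rewrite -(bigcup_mkord _ (fun k => X @^-1` cell a b δ k)) -probability_support.
congr (P _); apply/seteqP; split => [w [k _ []] //|w axb].
by exists (cellidx a b δ (X w)); first exact: cellidx_lt.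
Qed.

Lemma cellprob_le k : cellprob P X a b δ k <= M * δ.
Proof.
set J := [set` `[a + k%:R * δ, a + k.+1%:R * δ]].
have J_len : lebesgue_measure J = δ%:E.
  rewrite lebesgue_measure_itv /= lte_fin ltrD2l ltr_pM2r // ltr_nat ltnSn.
  by rewrite -EFinB -natr1; congr (_%:E); ring.
rewrite /cellprob -lee_fin fineK ?fin_num_measure //.
apply: (@le_trans _ _ (P (X @^-1` J))).
  apply: le_measure; rewrite ?inE //.
    by apply: measurable_funPTI; exact: measurable_itv.
  by move=> w /cell_sub h; rewrite /J /= in_itv /=; exact: h.
rewrite -[P _]/(distribution P X J) X_density; last exact: measurable_itv.
apply: (@le_trans _ _ (\int[lebesgue_measure]_(x in J) (cst M%:E x))%E).
  apply: ge0_le_integral => //; first exact: measurable_itv.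
  - by move=> x _; rewrite lee_fin.
  - exact/measurable_realfun.measurable_EFinP/measurable_funTS.
  - by move=> x _; rewrite lee_fin.
have -> : (M * δ)%:E = (M%:E * lebesgue_measure J)%E by rewrite J_len.
by rewrite integral_cst //; exact: measurable_itv.
Qed.

Hypothesis M_ge1 : 1 <= M.

Lemma EL_ge : - log2 (M * δ) <= EL P X a b δ.
Proof.
exact: (shannon_mean_ge M_ge1 δ_gt0 (cellprob_ge0 δ) cellprob_sum1 cellprob_le).
Qed.

Lemma EL_variance_itv :
  0 <= EL2 P X a b δ - EL P X a b δ ^+ 2 <=
  (b - a + δ) * ((4 + M ^+ 3) / ln 2 ^+ 2).
Proof.
apply/andP; split; first exact: (variance_ge0 (cellprob_ge0 δ) cellprob_sum1).
apply: (le_trans (shannon_variance_le M_ge1 δ_gt0 (cellprob_ge0 δ) cellprob_sum1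
  cellprob_le)).
rewrite ler_wpM2r ?divr_ge0 ?sqr_ge0 ?addr_ge0 ?exprn_ge0 ?(le_trans ler01) //.
by have /andP[_ /ltW] := ncells_bounds a b δ ab δ_gt0.
Qed.

End CellProbabilities.

Lemma bounded_div_cvgy0 {R : realFieldType} {U : Type} {F : set_system U}
    {FF : Filter F} {V L : U -> R} {K : R} :
  (\forall x \near F, `|V x| <= K) -> L @ F --> +oo ->
  (fun x => V x / L x) @ F --> 0.
Proof.
move=> VK /cvgryPgt L_cvg; apply/cvgr0Pnorm_lt => e e_gt0.
near=> x.
have L_gt0 : 0 < L x by near: x; exact: L_cvg.
have KL : K / e < L x by near: x; exact: L_cvg.
rewrite normrM normfV (gtr0_norm L_gt0) ltr_pdivrMr //.
by rewrite ltr_pdivrMr // mulrC in KL; apply: le_lt_trans KL; near: x.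
Unshelve. all: by end_near.
Qed.

Lemma Nlog2_mul_cvgy {R : realType} {M : R} : 0 < M ->
  - log2 (M * δ) @[δ --> 0^'+] --> +oo.
Proof.
move=> M_gt0; apply/cvgryPge => A; near=> δ.
have δ_gt0 : 0 < δ by near: δ; exact: nbhs_right_gt.
rewrite /log2 -mulNr ler_pdivlMr ?ln2_gt0 // lerNr.
rewrite -ler_expR lnK ?posrE ?mulr_gt0 //.
rewrite mulrC -ler_pdivlMr //; near: δ; apply: nbhs_right_le.
by rewrite divr_gt0 ?expR_gt0.
Unshelve. all: by end_near.
Qed.

Section Density.
Context {R : realType} {f : R -> R} {a b : R}.

Lemma eq0_outside_support : (forall x, 0 <= f x) ->
  closure [set x | 0 < f x] = [set` `[a, b]] ->
  forall x, ~ (a <= x <= b) -> f x = 0.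
Proof.
move=> f_ge0 supp x x_out; apply/eqP; rewrite eq_le f_ge0 andbT leNgt.
apply/negP => fx.
have : closure [set x | 0 < f x] x by exact: subset_closure.
by rewrite supp /= in_itv.
Qed.

Lemma continuous_itv_ub : a <= b -> {within [set` `[a, b]], continuous f} ->
  (forall x, ~ (a <= x <= b) -> f x = 0) ->
  exists2 M, 1 <= M & forall x, f x <= M.
Proof.
move=> ab fc f_out; have [c _ f_max] := EVT_max ab fc.
exists (1 + `|f c|); first by rewrite lerDl.
move=> x; have [axb|x_out] := boolP (a <= x <= b).
  rewrite (le_trans (f_max x _)) ?in_itv //.
  by rewrite (le_trans (ler_norm _)) // lerDr.
by rewrite f_out ?addr_ge0 //; exact/negP.
Qed.

End Density.

Section AgeOfInformation.
Context {R : realType} {d : measure_display} {T : measurableType d}.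
Variables (P : probability T R) (X : {RV P >-> R}) (a b δ : R).

Lemma H_uni_EL : H_uni P X a b δ = EL P X a b δ.
Proof. by rewrite /H_uni /EL -sumrN; apply: eq_bigr => k _; rewrite mulrN. Qed.

Lemma AoI_sub_entropyE : EL P X a b δ != 0 ->
  AoI_z_uni_s P X a b δ - 3 / 2 * H_uni P X a b δ =
  (EL2 P X a b δ - EL P X a b δ ^+ 2) / 2 / EL P X a b δ.
Proof. by move=> EL_neq0; rewrite /AoI_z_uni_s H_uni_EL; field. Qed.

End AgeOfInformation.

Theorem lemma3 (R : realType) (d : measure_display) (T : measurableType d)
  (P : probability T R) (X : {RV P >-> R}) (f : R -> R) (a b : R) :
  (* f is a pdf of X *)
  (forall x, 0 <= f x) ->
  measurable_fun setT f ->
  (forall A : set R, measurable A ->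
     distribution P X A = (\int[lebesgue_measure]_(x in A) (f x)%:E)%E) ->
  (* Condition (A): f continuous and differentiable, support = bounded interval I = [a,b] *)
  a < b ->
  closure [set x | 0 < f x] = [set` `[a, b]] ->
  {within [set` `[a, b]], continuous f} ->
  (forall x, a < x < b -> derivable f x 1) ->
  (* Condition (B) *)
  lebesgue_measure.-integrable [set` `[a, b]] (fun x => (f x * log2 (f x) ^+ 2)%:E) ->
  lebesgue_measure.-integrable [set` `[a, b]] (fun x => (- (f x * log2 (f x)))%:E) ->
  (fun delta => AoI_z_uni_s P X a b delta - 3 / 2 * H_uni P X a b delta)
    @ 0^'+ --> 0.
Proof.
move=> f_ge0 f_meas X_density ab supp f_cont _ _ _.
have f_out := eq0_outside_support f_ge0 supp.
have [M M_ge1 f_le] := continuous_itv_ub (ltW ab) f_cont f_out.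
have M_gt0 : 0 < M := lt_le_trans ltr01 M_ge1.
have EL_cvg : EL P X a b δ @[δ --> 0^'+] --> +oo.
  apply: (ger_cvgy _ (Nlog2_mul_cvgy M_gt0)); near=> δ.
  have δ_gt0 : 0 < δ by near: δ; exact: nbhs_right_gt.
  by apply: (EL_ge P X f_ge0 f_meas X_density ab f_out f_le).
set C := (4 + M ^+ 3) / ln 2 ^+ 2.
have C_ge0 : 0 <= C by rewrite divr_ge0 ?sqr_ge0 ?addr_ge0 ?exprn_ge0 ?ltW.
set K := (b - a + 1) * C.
have V_le : \forall δ \near 0^'+,
    `|(EL2 P X a b δ - EL P X a b δ ^+ 2) / 2| <= K.
  near=> δ.
  have δ_gt0 : 0 < δ by near: δ; exact: nbhs_right_gt.
  have δ_lt1 : δ < 1 by near: δ; apply: nbhs_right_lt; exact: ltr01.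
  have /andP[V_ge0 V_le] :=
    EL_variance_itv P X f_ge0 f_meas X_density ab f_out f_le δ_gt0 M_ge1.
  rewrite ger0_norm ?divr_ge0 // ler_pdivrMr // (le_trans V_le) //.
  have : 0 <= (b - a) * C by rewrite mulr_ge0 // subr_ge0 ltW.
  have : 0 <= (1 - δ) * C by rewrite mulr_ge0 // subr_ge0 ltW.
  rewrite /K /C; lra.
apply: (cvg_trans _ (bounded_div_cvgy0 V_le EL_cvg)); apply: near_eq_cvg.
near=> δ; rewrite AoI_sub_entropyE // gt_eqF //.
by near: δ; have /cvgryPgt := EL_cvg; exact.
Unshelve. all: by end_near.
Qed.
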